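(* For every integer $k\geq 1$, the symmetric directed paths satisfy $\chi'_{D_{1,2}}(\overleftrightarrow{P_{2k}}) = 2$ and $\chi'_{D_{1,2}}(\overleftrightarrow{P_{2k+1}}) = 3$. For every integer $n \geq 3$, the symmetric directed cycle satisfies $\chi'_{D_{1,2}}(\overleftrightarrow{C_n}) = 3$.
   Context: $P_n$ denotes the path on $n$ vertices and $C_n$ the cycle on $n$ vertices. For a simple graph $G$, the symmetric digraph $\overleftrightarrow{G}$ is obtained by replacing each edge $uv$ of $G$ by the pair of opposite arcs $\overrightarrow{uv}$ and $\overrightarrow{vu}$. An arc-colouring is proper of type I if any two consecutive arcs $\overrightarrow{uv},\overrightarrow{vw}$ (including $w=u$) receive distinct colours. An arc-colouring is distinguishing if the only automorphism of $\overleftrightarrow{G}$ preserving the colour of every arc is the identity. $\chi'_{D_{1,2}}(\overleftrightarrow{G})$ is the least number of colours in a distinguishing proper arc-colouring of type I of $\overleftrightarrow{G}$. *)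

From mathcomp Require Import all_boot all_fingroup.
Set Implicit Arguments. Unset Strict Implicit. Unset Printing Implicit Defensive.

(* Simple graphs on vertex set 'I_n are given by an adjacency relation
   (symmetric, irreflexive).  The symmetric digraph <->G has arc set
   { (u,v) | e u v }. *)

Definition path_rel (n : nat) : rel 'I_n :=
  fun i j => (i.+1 == j :> nat) || (j.+1 == i :> nat).

Definition cycle_rel (n : nat) : rel 'I_n :=
  fun i j => (j == i.+1 %% n :> nat) || (i == j.+1 %% n :> nat).

(* Arc colourings with k colours: a colour in 'I_k for every ordered pair;
   only the values on arcs (u,v) with e u v are relevant. *)
Definition arc_colouring (n k : nat) := {ffun 'I_n * 'I_n -> 'I_k}.

(* Proper of type I: consecutive arcs uv, vw (w = u allowed) get distinct colours. *)
Definition proper_typeI n k (e : rel 'I_n) (c : arc_colouring n k) : Prop :=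
  forall u v w, e u v -> e v w -> c (u, v) != c (v, w).

Definition digraph_aut n (e : rel 'I_n) (s : {perm 'I_n}) : Prop :=
  forall u v, e (s u) (s v) = e u v.

Definition distinguishing n k (e : rel 'I_n) (c : arc_colouring n k) : Prop :=
  forall s : {perm 'I_n}, digraph_aut e s ->
    (forall u v, e u v -> c (s u, s v) = c (u, v)) -> s = 1%g.

Definition has_DPC n (e : rel 'I_n) (k : nat) : Prop :=
  exists c : arc_colouring n k, proper_typeI e c /\ distinguishing e c.

Definition chiD12_is n (e : rel 'I_n) (k : nat) : Prop :=
  has_DPC e k /\ forall m, has_DPC e m -> k <= m.

From mathcomp Require Import all_boot all_fingroup zify.
Set Implicit Arguments. Unset Strict Implicit. Unset Printing Implicit Defensive.

(* With two colours, properness of type I forces the colours of consecutive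
   arcs to alternate: along any walk u v w x the arcs uv and wx get the same
   colour, and on a path the colour of an arc only depends on the parity of
   its tail.  Hence the reversal of P_(2k+1) and the rotation of C_n by two
   steps preserve every proper 2-colouring, so two colours never distinguish
   them; on P_(2k) the reversal changes parities, so colouring each arc by
   the parity of its tail is distinguishing.  With three colours, colour arcs
   by the parity of their tail and give the third colour to the arc 01 (on an
   odd cycle, where parity clashes at the last vertex, to the two arcs leaving
   that vertex instead): a colour-preserving automorphism then fixes the
   adjacent vertices 0 and 1, and an automorphism of a path or a cycle fixing
   two adjacent vertices is the identity. *)

Lemma ord2_eq_of_neq (x y z : 'I_2) : x != y -> y != z -> x = z.
Proof.
rewrite -!val_eqE => xy yz; apply/val_inj; move: xy yz => /=.
have := ltn_ord x; have := ltn_ord y; have := ltn_ord z; lia.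
Qed.

Section ArcColourings.
Variables (n : nat) (e : rel 'I_n).

Lemma has_DPC_gt1 k u v : e u v -> e v u -> has_DPC e k -> 1 < k.
Proof.
move=> euv evu [c [c_proper _]]; have := c_proper u v u euv evu.
rewrite -val_eqE /=; have := ltn_ord (c (u, v)); have := ltn_ord (c (v, u)); lia.
Qed.

Lemma chiD12_is2 u v : e u v -> e v u -> has_DPC e 2 -> chiD12_is e 2.
Proof. by move=> euv evu DPC2; split=> // m; apply: has_DPC_gt1 euv evu. Qed.

Lemma chiD12_is3 u v :
  e u v -> e v u -> has_DPC e 3 -> ~ has_DPC e 2 -> chiD12_is e 3.
Proof.
move=> euv evu DPC3 noDPC2; split=> // m DPCm.
have := has_DPC_gt1 euv evu DPCm.
by case: m DPCm => [|[|[|m]]] // /noDPC2.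
Qed.

Lemma no_DPC_of_invariant_aut k (s : {perm 'I_n}) :
  digraph_aut e s -> s != 1%g ->
  (forall c : arc_colouring n k, proper_typeI e c ->
     forall u v, e u v -> c (s u, s v) = c (u, v)) ->
  ~ has_DPC e k.
Proof.
move=> s_aut s_neq1 s_inv [c [c_proper c_dist]].
by case/eqP: s_neq1; apply: c_dist => //; apply: s_inv.
Qed.

Lemma proper2_walk3 (c : arc_colouring n 2) u v w x :
  proper_typeI e c -> e u v -> e v w -> e w x -> c (u, v) = c (w, x).
Proof.
move=> c_proper euv evw ewx.
exact: ord2_eq_of_neq (c_proper _ _ _ euv evw) (c_proper _ _ _ evw ewx).
Qed.

Lemma proper2_aut_invariant (c : arc_colouring n 2) (s : {perm 'I_n}) :
  proper_typeI e c -> digraph_aut e s ->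
  (forall u v, e u v -> e v (s u) \/ e (s v) u) ->
  forall u v, e u v -> c (s u, s v) = c (u, v).
Proof.
move=> c_proper s_aut s_link u v euv.
have esuv : e (s u) (s v) by rewrite s_aut.
case: (s_link u v euv) => [evsu | esvu].
  by rewrite (proper2_walk3 c_proper euv evsu esuv).
exact: proper2_walk3 c_proper esuv esvu euv.
Qed.

Lemma aut_single_nbr (s : {perm 'I_n}) v :
  digraph_aut e s -> (forall x y, e v x -> e v y -> x = y) ->
  forall x y, e (s v) x -> e (s v) y -> x = y.
Proof.
move=> s_aut v_single x y; rewrite -(permKV s x) -(permKV s y) !s_aut.
by move=> evx evy; rewrite (v_single _ _ evx evy).
Qed.

End ArcColourings.

Definition parity_colouring n : arc_colouring n 2 :=
  [ffun a : 'I_n * 'I_n => inord (odd a.1)].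

Definition marked_parity_colouring n : arc_colouring n 3 :=
  [ffun a : 'I_n * 'I_n => if (a.1 == 0 :> nat) && (a.2 == 1 :> nat) then inord 2
             else inord (odd a.1)].

Definition last_marked_parity_colouring n : arc_colouring n.+1 3 :=
  [ffun a : 'I_n.+1 * 'I_n.+1 => if a.1 == ord_max then inord 2 else inord (odd a.1)].

Section PathLikeGraphs.
Variables (N : nat) (e : rel 'I_N.+1).
Hypothesis e_succ : forall i j : 'I_N.+1, j = i.+1 :> nat -> e i j.
Hypothesis e_inner :
  forall j k : 'I_N.+1, 0 < j < N -> e j k -> k.+1 = j \/ k = j.+1 :> nat.

Lemma aut_fix01_eq1 (s : {perm 'I_N.+1}) :
  digraph_aut e s -> s ord0 = ord0 -> s (inord 1) = inord 1 -> s = 1%g.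
Proof.
move=> s_aut s0 s1.
suff fix_le m (i : 'I_N.+1) : i <= m.+1 -> s i = i.
  by apply/permP => i; rewrite perm1 (fix_le i).
elim: m i => [|m IHm] i le_i.
  have [->|->] // : i = ord0 \/ i = inord 1.
  by case: i le_i => [[|[|//]] lt_i] _; [left | right]; apply/val_inj; rewrite /= ?inordK.
case: (ltnP i m.+2) => [lt_i | ge_i]; first exact: IHm.
have i_val : i = m.+2 :> nat by lia.
have lt_m1 : m.+1 < N.+1 by have := ltn_ord i; lia.
pose j : 'I_N.+1 := inord m.+1; pose h : 'I_N.+1 := inord m.
have j_val : j = m.+1 :> nat by rewrite inordK.
have h_val : h = m :> nat by rewrite inordK; lia.
have ej_si : e j (s i).
  by rewrite -{1}(IHm j) ?j_val // s_aut; apply: e_succ; rewrite i_val j_val.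
have j_inner : 0 < j < N by rewrite j_val; have := ltn_ord i; lia.
have [si_h | si_val] := e_inner j_inner ej_si.
  have : s i = s h by rewrite (IHm h) ?h_val //; apply/val_inj; rewrite /= h_val; lia.
  by move/perm_inj/(congr1 val); rewrite /= h_val; lia.
by apply/val_inj; rewrite /= si_val j_val.
Qed.

Hypothesis e_parity : forall u v, e u v -> odd u != odd v.

Lemma marked_parity_proper : proper_typeI e (marked_parity_colouring N.+1).
Proof.
move=> u v w euv evw; have := e_parity euv; have := e_parity evw.
rewrite !ffunE /=.
by repeat case: ifP => ?; rewrite -val_eqE /= !inordK; lia.
Qed.

Lemma marked_parity_DPC : 0 < N -> has_DPC e 3.
Proof.
move=> N_gt0; exists (marked_parity_colouring N.+1).
split; first exact: marked_parity_proper.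
move=> s s_aut s_col; have e01 : e ord0 (inord 1) by apply: e_succ; rewrite inordK.
have := s_col _ _ e01; rewrite !ffunE /= inordK //=.
case: ifP => [/andP[/eqP s0 /eqP s1] _ | _ /(congr1 val)]; last first.
  by rewrite /= !inordK //; case: odd.
by apply: aut_fix01_eq1 => //; apply/val_inj; rewrite /= ?inordK.
Qed.

End PathLikeGraphs.

Section Paths.
Variable N : nat.
Local Notation path := (@path_rel N.+1).

Lemma path_succ (i j : 'I_N.+1) : j = i.+1 :> nat -> path i j.
Proof. by rewrite /path_rel => ->; rewrite eqxx. Qed.

Lemma path_inner (j k : 'I_N.+1) :
  0 < j < N -> path j k -> k.+1 = j \/ k = j.+1 :> nat.
Proof. by rewrite /path_rel => _ /orP[] /eqP; [right | left]. Qed.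

Lemma path_parity (u v : 'I_N.+1) : path u v -> odd u != odd v.
Proof. by rewrite /path_rel; lia. Qed.

Lemma path_relC (u v : 'I_N.+1) : path u v = path v u.
Proof. exact: orbC. Qed.

Lemma path_rel0 (v : 'I_N.+1) : path ord0 v -> v = 1 :> nat.
Proof. by rewrite /path_rel => /orP[] /eqP. Qed.

Lemma path_rel01 : 0 < N -> path ord0 (inord 1).
Proof. by move=> N_gt0; apply: path_succ; rewrite inordK. Qed.

Lemma path_single_nbr (v : 'I_N.+1) :
  (forall x y, path v x -> path v y -> x = y) -> v = 0 :> nat \/ v = N :> nat.
Proof.
move=> v_single; have := ltn_ord v; case: (posnP v) => [-> | v_gt0 lt_v]; first by left.
case: (ltnP v N) => [v_ltN | ]; last by right; lia.
have /(congr1 val) : inord v.-1 = inord v.+1 :> 'I_N.+1.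
  by apply: v_single; rewrite /path_rel inordK; lia.
by rewrite /= !inordK; lia.
Qed.

Lemma path_aut0 (s : {perm 'I_N.+1}) :
  digraph_aut path s -> s ord0 = 0 :> nat \/ s ord0 = N :> nat.
Proof.
move=> s_aut; apply: path_single_nbr; apply: aut_single_nbr s_aut _.
by move=> x y /path_rel0 x1 /path_rel0 y1; apply/val_inj; rewrite /= x1 y1.
Qed.

Lemma path_aut_fix0 (s : {perm 'I_N.+1}) :
  0 < N -> digraph_aut path s -> s ord0 = ord0 -> s = 1%g.
Proof.
move=> N_gt0 s_aut s0; apply: (aut_fix01_eq1 path_succ path_inner s_aut s0).
have : path (s ord0) (s (inord 1)) by rewrite s_aut path_rel01.
by rewrite s0 => /path_rel0 s1; apply/val_inj; rewrite /= s1 inordK.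
Qed.

Definition path_reversal : {perm 'I_N.+1} := perm (@rev_ord_inj N.+1).

Lemma path_reversalE i : path_reversal i = N - i :> nat.
Proof. by rewrite permE /= subSS. Qed.

Lemma path_reversal_aut : digraph_aut path path_reversal.
Proof.
move=> u v; rewrite /path_rel !path_reversalE.
have := ltn_ord u; have := ltn_ord v; lia.
Qed.

Lemma path_reversal_neq1 : 0 < N -> path_reversal != 1%g.
Proof.
move=> N_gt0; apply/eqP => /permP/(_ ord0)/(congr1 val) /=.
by rewrite perm1 path_reversalE subn0 => N0; rewrite N0 in N_gt0.
Qed.

Lemma path_proper2E (c : arc_colouring N.+1 2) :
  0 < N -> proper_typeI path c -> forall u v, path u v ->
  c (u, v) = if odd u then c (inord 1, ord0) else c (ord0, inord 1).
Proof.
move=> N_gt0 c_proper.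
have e01 := path_rel01 N_gt0; have e10 : path (inord 1) ord0 by rewrite path_relC.
have c01_neq_c10 := c_proper _ _ _ e01 e10.
suff colE m (u v : 'I_N.+1) : u = m :> nat -> path u v ->
    c (u, v) = if odd m then c (inord 1, ord0) else c (ord0, inord 1).
  by move=> u v; apply: colE.
elim: m u v => [|m IHm] u v u_val euv.
  have u0 : u = ord0 by apply/val_inj.
  rewrite u0 in euv *; have v1 : v = inord 1.
    by apply/val_inj; rewrite /= inordK ?(path_rel0 euv).
  by rewrite v1.
have lt_m : m < N.+1 by have := ltn_ord u; lia.
have ewu : path (inord m) u by apply: path_succ; rewrite inordK.
have := c_proper _ _ _ ewu euv; rewrite (IHm _ u) ?inordK //= => neq.
case: odd neq => neq.
  by apply: (@ord2_eq_of_neq _ (c (inord 1, ord0))); rewrite // eq_sym.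
by apply: (@ord2_eq_of_neq _ (c (ord0, inord 1))); rewrite // eq_sym.
Qed.

Lemma path_no_DPC2 : 0 < N -> ~~ odd N -> ~ has_DPC path 2.
Proof.
move=> N_gt0 N_even.
apply: (no_DPC_of_invariant_aut path_reversal_aut (path_reversal_neq1 N_gt0)).
move=> c c_proper u v euv.
have esuv : path (path_reversal u) (path_reversal v) by rewrite path_reversal_aut.
rewrite (path_proper2E N_gt0 c_proper esuv) (path_proper2E N_gt0 c_proper euv).
by rewrite path_reversalE oddN ?(negbTE N_even) // -ltnS.
Qed.

Lemma path_parity_DPC : odd N -> has_DPC path 2.
Proof.
move=> N_odd; have N_gt0 := odd_gt0 N_odd.
exists (parity_colouring N.+1); split.
  move=> u v w euv evw; have := path_parity euv.
  by rewrite !ffunE -val_eqE /= !inordK; lia.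
move=> s s_aut s_col; apply: path_aut_fix0 => //.
have := s_col _ _ (path_rel01 N_gt0); rewrite !ffunE /= => /(congr1 val).
rewrite /= !inordK; try lia.
by move: (path_aut0 s_aut) => s0_end s0_even; apply/val_inj => /=; lia.
Qed.

Lemma chiD12_path_even_order : odd N -> chiD12_is path 2.
Proof.
move=> N_odd; have e01 := path_rel01 (odd_gt0 N_odd).
by apply: (chiD12_is2 e01); [rewrite path_relC | exact: path_parity_DPC].
Qed.

Lemma chiD12_path_odd_order : 0 < N -> ~~ odd N -> chiD12_is path 3.
Proof.
move=> N_gt0 N_even; have e01 := path_rel01 N_gt0.
have e10 : path (inord 1) ord0 by rewrite path_relC.
exact: chiD12_is3 e01 e10 (marked_parity_DPC path_succ path_inner path_parity N_gt0)
  (path_no_DPC2 N_gt0 N_even).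
Qed.

End Paths.

Section Cycles.
Variable N : nat.
Local Notation cycle := (@cycle_rel N.+1).

Lemma cycle_rel_ordS (u v : 'I_N.+1) : cycle u v = (v == ordS u) || (u == ordS v).
Proof. by rewrite /cycle_rel -!val_eqE. Qed.

Lemma ord_succ_modn (i : 'I_N.+1) : i.+1 %% N.+1 = if i == N :> nat then 0 else i.+1.
Proof.
case: eqP => [-> | ne_iN]; first exact: modnn.
by apply: modn_small; have := ltn_ord i; lia.
Qed.

Lemma cycle_relE (u v : 'I_N.+1) : cycle u v =
  [|| v == u.+1 :> nat, (u == N :> nat) && (v == 0 :> nat),
      u == v.+1 :> nat | (v == N :> nat) && (u == 0 :> nat)].
Proof.
rewrite /cycle_rel !ord_succ_modn.
have := ltn_ord u; have := ltn_ord v.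
by case: ifP; case: ifP; lia.
Qed.

Lemma cycle_succ (i j : 'I_N.+1) : j = i.+1 :> nat -> cycle i j.
Proof. by rewrite cycle_relE => ->; rewrite eqxx. Qed.

Lemma cycle_inner (j k : 'I_N.+1) :
  0 < j < N -> cycle j k -> k.+1 = j \/ k = j.+1 :> nat.
Proof. by rewrite cycle_relE; lia. Qed.

Lemma cycle_relC (u v : 'I_N.+1) : cycle u v = cycle v u.
Proof. exact: orbC. Qed.

Lemma cycle_rel01 : 0 < N -> cycle ord0 (inord 1).
Proof. by move=> N_gt0; apply: cycle_succ; rewrite inordK. Qed.

Definition cycle_rotation : {perm 'I_N.+1} := perm (@ordS_inj N.+1).

Lemma cycle_rotation_aut : digraph_aut cycle cycle_rotation.
Proof. by move=> u v; rewrite !cycle_rel_ordS !permE !(inj_eq (@ordS_inj _)). Qed.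

Lemma cycle_no_DPC2 : 1 < N -> ~ has_DPC cycle 2.
Proof.
move=> N_gt1; pose s := (cycle_rotation * cycle_rotation)%g.
have sE u : s u = ordS (ordS u) by rewrite permM !permE.
have s_aut : digraph_aut cycle s by move=> u v; rewrite !permM !cycle_rotation_aut.
apply: (no_DPC_of_invariant_aut s_aut).
  apply/eqP => /permP/(_ ord0)/(congr1 val); rewrite sE perm1 /=.
  by rewrite !modn_small //; lia.
move=> c c_proper; apply: proper2_aut_invariant c_proper s_aut _ => u v.
by rewrite !cycle_rel_ordS !sE => /orP[] /eqP ->; [left | right]; rewrite eqxx ?orbT.
Qed.

Lemma cycle_parity : odd N -> forall u v : 'I_N.+1, cycle u v -> odd u != odd v.
Proof. by move=> N_odd u v; rewrite cycle_relE; lia. Qed.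

Lemma last_marked_parity_proper :
  0 < N -> ~~ odd N -> proper_typeI cycle (last_marked_parity_colouring N).
Proof.
move=> N_gt0 N_even u v w; rewrite !cycle_relE => euv evw.
apply/negP; rewrite !ffunE -!val_eqE /=.
have := ltn_ord u; have := ltn_ord v; have := ltn_ord w.
by repeat case: ifP => ?; rewrite ?inordK; lia.
Qed.

Lemma odd_cycle_DPC3 : 1 < N -> ~~ odd N -> has_DPC cycle 3.
Proof.
move=> N_gt1 N_even; exists (last_marked_parity_colouring N).
split; first exact: last_marked_parity_proper (ltnW N_gt1) N_even.
move=> s s_aut s_col.
have eN0 : cycle ord_max ord0 by rewrite cycle_relE eqxx.
have e01 := cycle_rel01 (ltnW N_gt1).
have sN : s ord_max = ord_max.
  have := s_col _ _ eN0; rewrite !ffunE /= eqxx.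
  by case: eqP => // _ /(congr1 val); rewrite /= !inordK //; case: odd.
have s0 : s ord0 = ord0.
  have : cycle ord_max (s ord0) by rewrite -sN s_aut.
  rewrite cycle_relE /= => eN_s0; apply/val_inj => /=.
  have := s_col _ _ e01; rewrite !ffunE -!val_eqE /= => /(congr1 val).
  have := ltn_ord (s ord0).
  by repeat case: ifP => ?; rewrite /= ?inordK; lia.
have s1 : s (inord 1) = inord 1.
  have : cycle ord0 (s (inord 1)) by rewrite -s0 s_aut.
  rewrite cycle_relE /= => e0_s1.
  have : s (inord 1) != s ord_max by rewrite (inj_eq perm_inj) -val_eqE /= inordK //; lia.
  rewrite sN -val_eqE /= => s1_neq_N; apply/val_inj.
  by rewrite /= inordK; have := ltn_ord (s (inord 1)); lia.
exact: (aut_fix01_eq1 cycle_succ cycle_inner s_aut s0 s1).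
Qed.

Lemma chiD12_cycle : 1 < N -> chiD12_is cycle 3.
Proof.
move=> N_gt1; have e01 := cycle_rel01 (ltnW N_gt1).
have e10 : cycle (inord 1) ord0 by rewrite cycle_relC.
apply: (chiD12_is3 e01 e10); last exact: cycle_no_DPC2.
have [N_odd | N_even] := boolP (odd N); last exact: odd_cycle_DPC3.
exact: marked_parity_DPC cycle_succ cycle_inner (cycle_parity N_odd) (ltnW N_gt1).
Qed.

End Cycles.

Theorem mainTheorem3 :
  (forall k : nat, 1 <= k ->
     chiD12_is (@path_rel k.*2) 2 /\ chiD12_is (@path_rel k.*2.+1) 3) /\
  (forall n : nat, 3 <= n -> chiD12_is (@cycle_rel n) 3).
Proof.
split=> [[|k] // _ | [|N] // N_ge3]; last exact: chiD12_cycle.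
rewrite doubleS; split; first by apply: chiD12_path_even_order; rewrite /= odd_double.
by apply: chiD12_path_odd_order; rewrite //= odd_double.
Qed.
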